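(* Let $f$ be an L-additive arithmetic function whose associated completely multiplicative function $h_f$ is nonzero-valued, let $\Lambda_f$ be its generalized von Mangoldt function, and let $g$ be a completely additive arithmetic function. Then for every positive integer $n$, $$(1\ast g\Lambda_f)(n)=\sum_{d\mid n}g(d)\Lambda_f(d)=\frac{1}{2}\sum_{p^{\alpha}\parallel n}\frac{\alpha(\alpha+1)f(p)g(p)}{h_f(p)}.$$
   Context: An arithmetic function $f:\mathbb{N}\to\mathbb{C}$ is L-additive if there is a completely multiplicative function $h_f$ such that $f(mn)=f(m)h_f(n)+f(n)h_f(m)$ for all positive integers $m,n$; such an $h_f$ is fixed. $\Lambda_f(n)=\frac{f(p)}{h_f(p)}$ if $n=p^k$ for some prime $p$ and integer $k\geq1$, and $0$ otherwise. A function $g$ is completely additive if $g(mn)=g(m)+g(n)$ for all positive integers $m,n$. $1$ is the constant function $1$, $\ast$ is Dirichlet convolution, $g\Lambda_f$ is the pointwise product, and $\sum_{p^\alpha\parallel n}$ runs over the primes $p$ dividing $n$ with $\alpha$ the exact exponent of $p$ in $n$. *)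

From mathcomp Require Import all_boot all_order all_algebra.
From mathcomp Require Import complex.
From mathcomp Require Import all_classical all_reals.
Set Implicit Arguments. Unset Strict Implicit. Unset Printing Implicit Defensive.
Import Order.TTheory GRing.Theory Num.Theory.
Local Open Scope ring_scope.

(* Arithmetic functions N -> C, with C = R[i] (complex numbers over a realType R).
   Values at 0 are irrelevant: all conditions quantify over positive integers. *)

Definition completely_multiplicative (C : nzRingType) (h : nat -> C) : Prop :=
  h 1%N = 1 /\ forall m n : nat, (0 < m)%N -> (0 < n)%N -> h (m * n)%N = h m * h n.

Definition completely_additive (C : nmodType) (g : nat -> C) : Prop :=
  forall m n : nat, (0 < m)%N -> (0 < n)%N -> g (m * n)%N = g m + g n.

Definition L_additive_wrt (C : comNzRingType) (f h : nat -> C) : Prop :=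
  completely_multiplicative h /\
  forall m n : nat, (0 < m)%N -> (0 < n)%N -> f (m * n)%N = f m * h n + f n * h m.

(* generalized von Mangoldt function: f(p)/h(p) if n = p^k (p prime, k >= 1), else 0 *)
Definition Lambda_f (C : fieldType) (f h : nat -> C) (n : nat) : C :=
  if [exists p : 'I_n.+1, exists k : 'I_n.+1,
        [&& prime p, (0 < k)%N & n == ((p : nat) ^ (k : nat))%N]]
  then f (pdiv n) / h (pdiv n) else 0.

Definition dconv (C : nzRingType) (a b : nat -> C) (n : nat) : C :=
  \sum_(d <- divisors n) a d * b (n %/ d)%N.

From mathcomp Require Import all_boot all_order all_algebra.
From mathcomp Require Import complex.
From mathcomp Require Import all_classical all_reals.
From mathcomp Require Import zify ring.
Import Order.TTheory GRing.Theory Num.Theory Num.Def.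
Local Open Scope ring_scope.
Local Open Scope complex_scope.

(* Reindexing d |-> n/d gives the first identity. For the second, Lambda_f
   vanishes off prime powers and equals f(p)/h(p) at p^k, while g(p^k) = k g(p);
   so the divisor sum is the sum over p^a || n of (1 + ... + a) g(p) f(p)/h(p). *)

Lemma divn_divK n d : (0 < n)%N -> (d %| n)%N -> (n %/ (n %/ d))%N = d.
Proof.
by move=> n_gt0 dvd_dn; rewrite divnA // mulKn // (dvdn_gt0 n_gt0 dvd_dn).
Qed.

Lemma sum_divisors_div (V : nmodType) (F : nat -> V) n : (0 < n)%N ->
  \sum_(d <- divisors n) F (n %/ d)%N = \sum_(d <- divisors n) F d.
Proof.
move=> n_gt0; rewrite -(big_map (fun d => n %/ d)%N xpredT F).
apply/perm_big/uniq_perm; rewrite ?divisors_uniq //.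
  rewrite map_inj_in_uniq ?divisors_uniq // => d e.
  rewrite -!dvdn_divisors // => dvd_dn dvd_en /(congr1 (divn n)).
  by rewrite !divn_divK.
move=> d; apply/mapP/idP => [[e] | ].
  by rewrite -!dvdn_divisors // => dvd_en ->; apply: dvdn_div.
rewrite -dvdn_divisors // => dvd_dn; exists (n %/ d)%N; last by rewrite divn_divK.
by rewrite -dvdn_divisors // dvdn_div.
Qed.

Lemma dconv1l (C : nzRingType) (b : nat -> C) n : (0 < n)%N ->
  dconv (fun _ => 1) b n = \sum_(d <- divisors n) b d.
Proof.
move=> n_gt0; rewrite /dconv; under eq_bigr do rewrite mul1r.
exact: sum_divisors_div.
Qed.

Section CompletelyAdditive.

Variables (V : zmodType) (g : nat -> V).
Hypothesis g_add : completely_additive g.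

Lemma completely_additive1 : g 1%N = 0.
Proof. by apply: (addrI (g 1%N)); rewrite -g_add // addr0. Qed.

Lemma completely_additiveX p k : (0 < p)%N -> g (p ^ k)%N = g p *+ k.
Proof.
move=> p_gt0; elim: k => [|k IHk]; first exact: completely_additive1.
by rewrite expnS g_add ?expn_gt0 ?p_gt0 // IHk mulrS.
Qed.

End CompletelyAdditive.

Definition prime_power (d : nat) : Prop :=
  exists p k, [/\ prime p, (0 < k)%N & d = p ^ k]%N.

Lemma Lambda_f_prime_power (C : fieldType) (f h : nat -> C) d :
  Lambda_f f h d != 0 -> prime_power d.
Proof.
rewrite /Lambda_f; case: ifP => [|_]; last by rewrite eqxx.
by case/existsP=> p /existsP[k /and3P[p_pr k_gt0 /eqP->]] _; exists p, k.
Qed.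

Lemma Lambda_fX (C : fieldType) (f h : nat -> C) p k : prime p ->
  Lambda_f f h (p ^ k.+1) = f p / h p.
Proof.
move=> p_pr; rewrite /Lambda_f pdiv_pfactor //; case: ifP => // /negbT/negP[].
have p_gt1 := prime_gt1 p_pr.
have p_lt : (p < (p ^ k.+1).+1)%N by rewrite ltnS -{1}(expn1 p) leq_pexp2l // ltnW.
have k_lt : (k.+1 < (p ^ k.+1).+1)%N by rewrite ltnW // ltnS ltn_expl.
apply/existsP; exists (Ordinal p_lt); apply/existsP; exists (Ordinal k_lt).
by rewrite /= p_pr eqxx.
Qed.

Definition prime_power_divisors (n : nat) : seq nat :=
  [seq p ^ k.+1 | p <- primes n, k <- iota 0 (logn p n)]%N.

Lemma prime_power_divisors_uniq n : uniq (prime_power_divisors n).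
Proof.
apply: allpairs_uniq_dep => [|p _|]; rewrite ?primes_uniq ?iota_uniq //.
move=> [p k] [q l] /allpairsPdep[p' [k' [p'_n _ [-> ->]]]].
move=> /allpairsPdep[q' [l' [q'_n _ [-> ->]]]] /= eq_pq.
have [p'_pr q'_pr] : prime p' /\ prime q'.
  by move: p'_n q'_n; rewrite !mem_primes => /and3P[? _ _] /and3P[? _ _].
have eq_pq' : p' = q' by rewrite -(pdiv_pfactor k' p'_pr) eq_pq pdiv_pfactor.
by move: eq_pq; rewrite eq_pq' => /(congr1 (logn q')); rewrite !pfactorK // => -[->].
Qed.

Lemma mem_prime_power_divisors n p k : (0 < n)%N -> prime p ->
  ((p ^ k.+1)%N \in prime_power_divisors n) = (p ^ k.+1 %| n)%N.
Proof.
move=> n_gt0 p_pr; apply/allpairsPdep/idP => [[q [l [q_n l_lt ->]]] | dvd_pn].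
  by rewrite pfactor_dvdn ?(allP (all_prime_primes n)) //; rewrite mem_iota in l_lt.
exists p, k; split=> //; last by rewrite mem_iota -pfactor_dvdn.
by rewrite mem_primes p_pr n_gt0 (dvdn_trans _ dvd_pn) // dvdn_exp.
Qed.

Lemma prime_power_divisors_sub n : (0 < n)%N ->
  {subset prime_power_divisors n <= divisors n}.
Proof.
move=> n_gt0 _ /allpairsPdep[p [k [p_n k_lt ->]]].
rewrite -dvdn_divisors // pfactor_dvdn ?(allP (all_prime_primes n)) //.
by rewrite mem_iota in k_lt.
Qed.

Lemma sum_divisors_prime_power (V : nmodType) (F : nat -> V) n : (0 < n)%N ->
  (forall d, F d != 0 -> prime_power d) ->
  \sum_(d <- divisors n) F d
    = \sum_(p <- primes n) \sum_(k < logn p n) F (p ^ k.+1)%N.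
Proof.
move=> n_gt0 F_supp.
rewrite (bigID (mem (prime_power_divisors n))) /=.
rewrite [X in _ + X]big1_seq ?addr0; last first.
  move=> d /andP[d_ppd d_n]; apply/eqP; apply: contraNT d_ppd.
  move=> /F_supp[p [[|k] [p_pr // _ d_eq]]]; rewrite d_eq in d_n *.
  by rewrite mem_prime_power_divisors // dvdn_divisors.
rewrite -big_filter (perm_big (prime_power_divisors n)); last first.
  apply: uniq_perm; rewrite ?filter_uniq ?divisors_uniq ?prime_power_divisors_uniq //.
  move=> d; rewrite mem_filter andb_idr //; exact: prime_power_divisors_sub.
rewrite big_allpairs_dep; apply: eq_bigr => p _.
by rewrite -(big_mkord xpredT (fun k => F (p ^ k.+1)%N)) /index_iota subn0.
Qed.

Lemma sumr_mulrnS (C : numFieldType) (x : C) l :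
  \sum_(k < l) x *+ k.+1 = 2^-1 * x *+ (l * l.+1).
Proof.
have sum_succ2 : (2 * \sum_(k < l) k.+1 = l * l.+1)%N.
  elim: l => [|l IHl]; first by rewrite big_ord0.
  by rewrite big_ord_recr /= mulnDr IHl; lia.
by rewrite sumrMnr -sum_succ2 mulrnA; congr (_ *+ _); field.
Qed.

Theorem theorem2p3 (R : realType) (f h g : nat -> R[i])
  (hLadd : L_additive_wrt f h)
  (hnz : forall n : nat, (0 < n)%N -> h n != 0)
  (hg : completely_additive g) (n : nat) (hn : (0 < n)%N) :
  dconv (fun _ => 1) (fun d => g d * Lambda_f f h d) n
    = \sum_(d <- divisors n) g d * Lambda_f f h d
  /\ \sum_(d <- divisors n) g d * Lambda_f f h d
    = 2^-1 * \sum_(p <- primes n)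
        ((logn p n * (logn p n).+1)%:R * f p * g p / h p).
Proof.
have supp_gLambda d : g d * Lambda_f f h d != 0 -> prime_power d.
  by rewrite mulf_eq0 negb_or => /andP[_ /Lambda_f_prime_power].
split; first exact: dconv1l.
rewrite sum_divisors_prime_power // big_distrr.
apply: eq_big_seq => p /(allP (all_prime_primes n)) p_pr.
under eq_bigr do rewrite Lambda_fX // completely_additiveX ?prime_gt0 // mulrnAl.
by rewrite sumr_mulrnS -mulr_natl /=; ring.
Qed.
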